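(* Let $C$ be a linear code over $\mathbb{Z}_4$ of length $n$ and type $4^{k_1}2^{k_2}$, with generator matrix $G\in\mathbb{Z}_4^{(k_1+k_2)\times n}$. If no column of $G$ lies in $(2\mathbb{Z}_4)^{k_1+k_2}$, then $$\sum_{\mathbf{x}\in(2\mathbb{Z}_4)^{k_1+k_2}\setminus\{\mathbf{0}\}}w_L(\mathbf{x}G)=2^{k_1+k_2}n.$$
   Context: A linear code of length $n$ over $\mathbb{Z}_4$ is a $\mathbb{Z}_4$-submodule of $\mathbb{Z}_4^n$, of type $4^{k_1}2^{k_2}$ if isomorphic to $\mathbb{Z}_4^{k_1}\times\mathbb{Z}_2^{k_2}$. A generator matrix is a matrix whose rows generate the code and no proper subset of whose rows does. $2\mathbb{Z}_4=\{0,2\}$. Lee weight: $w_L(0)=0,w_L(1)=1,w_L(2)=2,w_L(3)=1$, additive on vectors. *)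

From HB Require Import structures.
From mathcomp Require Import all_boot all_order all_algebra.
Set Implicit Arguments. Unset Strict Implicit. Unset Printing Implicit Defensive.
Import GRing.Theory.
Local Open Scope ring_scope.

Definition twoZ4 : {set 'Z_4} := [set 0; 2%:R].

Definition lee_wt (x : 'Z_4) : nat :=
  match nat_of_ord x with 0 => 0 | 1 => 1 | 2 => 2 | _ => 1 end%N.

Definition lee_weight n (v : 'rV['Z_4]_n) : nat := (\sum_(j < n) lee_wt (v ord0 j))%N.

Definition is_Z4_linear_code n (C : {set 'rV['Z_4]_n}) : Prop :=
  0 \in C /\ (forall u v, u \in C -> v \in C -> u + v \in C)
  /\ (forall (a : 'Z_4) u, u \in C -> a *: u \in C).

(* C has type 4^k1 2^k2: C is isomorphic (as a Z_4-module, equivalently as an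
   abelian group) to Z_4^k1 x Z_2^k2. *)
Definition has_type n (C : {set 'rV['Z_4]_n}) (k1 k2 : nat) : Prop :=
  exists f : 'rV['Z_4]_k1 * 'rV['Z_2]_k2 -> 'rV['Z_4]_n,
    [/\ forall x y, f (x + y) = f x + f y,
        injective f &
        forall v, (v \in C) <-> (exists x, v = f x)].

Definition row_span m n (G : 'M['Z_4]_(m, n)) (S : {set 'I_m}) : {set 'rV['Z_4]_n} :=
  [set a *m G | a in [set a : 'rV['Z_4]_m | [forall j, (j \notin S) ==> (a ord0 j == 0)]]].

Definition is_generator_matrix m n (G : 'M['Z_4]_(m, n)) (C : {set 'rV['Z_4]_n}) : Prop :=
  row_span G setT = C /\ (forall S : {set 'I_m}, S \proper setT -> row_span G S != C).

From HB Require Import structures.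
From mathcomp Require Import all_boot all_order all_algebra.
Set Implicit Arguments. Unset Strict Implicit. Unset Printing Implicit Defensive.
Import GRing.Theory.
Local Open Scope ring_scope.

(* For x in (2Z_4)^m, every coordinate of xG lies in 2Z_4.  If G i0 j is odd,
   adding 2 to x_i0 is an involution of (2Z_4)^m that adds 2 to (xG)_j, i.e.
   swaps the Lee weights 0 and 2 there; hence coordinate j contributes exactly
   2^m to the total weight, and the zero vector contributes nothing. *)

Definition rV_on (T : finType) m (A : {set T}) : {set 'rV[T]_m} :=
  [set x : 'rV[T]_m | [forall i, x ord0 i \in A]].

Lemma card_rV_on (T : finType) m (A : {set T}) : #|rV_on m A| = (#|A| ^ m)%N.
Proof.
have row_inj : injective (fun g : {ffun 'I_m -> T} => \row_i g i).
  by move=> g h /rowP gh; apply/ffunP => i; have := gh i; rewrite !mxE.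
have -> : rV_on m A = [set \row_i g i | g : {ffun 'I_m -> T} in ffun_on A].
  apply/setP => x; rewrite inE; apply/forallP/imsetP => [xA | [g /ffun_onP gA ->] i].
    exists [ffun i => x ord0 i]; first by apply/ffun_onP => i; rewrite ffunE.
    by apply/rowP => i; rewrite !mxE ffunE.
  by rewrite mxE.
by rewrite card_imset // card_ffun_on card_ord.
Qed.

Lemma sum_involution_pair (T : finType) (E : {set T}) (t : T -> T)
    (F : T -> nat) (c : nat) :
  involutive t -> {homo t : x / x \in E} ->
  {in E, forall x, F x + F (t x) = c}%N ->
  ((\sum_(x in E) F x).*2 = c * #|E|)%N.
Proof.
move=> tK tE Fc.
have sum_t : (\sum_(x in E) F (t x) = \sum_(x in E) F x)%N.
  rewrite [RHS](reindex_inj (inv_inj tK)); apply: eq_bigl => x.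
  by apply/idP/idP => [/tE | /tE]; rewrite ?tK.
rewrite -addnn -{2}sum_t -big_split /= -sum1_card big_distrr /=.
by apply: eq_bigr => x /Fc; rewrite muln1.
Qed.

Lemma twoZ4E (a : 'Z_4) : (a \in twoZ4) = (2%:R * a == 0).
Proof. by case: a => [[|[|[|[|?]]]] ?]; rewrite !inE. Qed.

Lemma card_twoZ4 : #|twoZ4| = 2%N.
Proof. by rewrite cards2. Qed.

Lemma mul2_notin_twoZ4 (g : 'Z_4) : g \notin twoZ4 -> 2%:R * g = 2%:R.
Proof. by case: g => [[|[|[|[|?]]]] ?] //; rewrite !inE // => _; apply/val_inj. Qed.

Lemma lee_wt_twoZ4_add2 (y : 'Z_4) : y \in twoZ4 -> (lee_wt y + lee_wt (y + 2%:R)%R = 2)%N.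
Proof. by rewrite !inE => /orP[] /eqP ->. Qed.

Lemma lee_weight0 n : lee_weight (0 : 'rV['Z_4]_n) = 0%N.
Proof. by rewrite /lee_weight big1 // => j _; rewrite mxE. Qed.

Lemma mulmx_rV_on_twoZ4 m n (x : 'rV['Z_4]_m) (G : 'M['Z_4]_(m, n)) (j : 'I_n) :
  x \in rV_on m twoZ4 -> (x *m G) ord0 j \in twoZ4.
Proof.
rewrite inE => /forallP x2; rewrite twoZ4E mxE mulr_sumr big1 // => i _.
by have := x2 i; rewrite twoZ4E mulrA => /eqP ->; rewrite mul0r.
Qed.

Lemma sum_lee_wt_mulmx_rV_on_twoZ4 m n (G : 'M['Z_4]_(m, n)) (i0 : 'I_m) (j : 'I_n) :
  G i0 j \notin twoZ4 ->
  (\sum_(x in rV_on m twoZ4) lee_wt ((x *m G) ord0 j) = 2 ^ m)%N.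
Proof.
move=> G_odd.
pose t (x : 'rV['Z_4]_m) := x + 2%:R *: 'e_i0.
have tK : involutive t by move=> x; rewrite /t -addrA -scalerDl -natrD pchar_Zp // scale0r addr0.
have tE : {homo t : x / x \in rV_on m twoZ4}.
  move=> x; rewrite !inE => /forallP x2; apply/forallP => i; rewrite !mxE twoZ4E mulrDr.
  by have := x2 i; rewrite twoZ4E => /eqP ->; rewrite add0r mulrA -natrM pchar_Zp ?mul0r.
have tG x : (t x *m G) ord0 j = (x *m G) ord0 j + 2%:R.
  by rewrite mulmxDl -scalemxAl -rowE !mxE mul2_notin_twoZ4.
pose F (x : 'rV['Z_4]_m) := lee_wt ((x *m G) ord0 j).
have F_pair : {in rV_on m twoZ4, forall x, F x + F (t x) = 2}%N.
  by move=> x /mulmx_rV_on_twoZ4 xG2; rewrite /F tG lee_wt_twoZ4_add2.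
have := sum_involution_pair tK tE F_pair.
by rewrite card_rV_on card_twoZ4 -mul2n => /eqP; rewrite eqn_pmul2l // => /eqP.
Qed.

Theorem corollary3p6 (n k1 k2 : nat) (C : {set 'rV['Z_4]_n})
  (G : 'M['Z_4]_(k1 + k2, n)) :
  is_Z4_linear_code C ->
  has_type C k1 k2 ->
  is_generator_matrix G C ->
  (forall j : 'I_n, exists i : 'I_(k1 + k2), G i j \notin twoZ4) ->
  (\sum_(x : 'rV['Z_4]_(k1 + k2) | (x != 0 :> 'rV['Z_4]_(k1 + k2))%R && [forall i, x ord0 i \in twoZ4])
      lee_weight (x *m G))%N = (2 ^ (k1 + k2) * n)%N.
Proof.
move=> _ _ _ odd_col.
have -> : (\sum_(x | (x != 0 :> 'rV['Z_4]_(k1 + k2))%R && [forall i, x ord0 i \in twoZ4]) lee_weight (x *m G)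
           = \sum_(x in rV_on (k1 + k2) twoZ4) lee_weight (x *m G))%N.
  rewrite [RHS](bigD1 0) ?inE /=; last by apply/forallP => i; rewrite mxE !inE eqxx.
  by rewrite mul0mx lee_weight0 add0n; apply: eq_bigl => x; rewrite inE andbC.
rewrite /lee_weight exchange_big (eq_bigr (fun=> 2 ^ (k1 + k2)))%N.
  by rewrite sum_nat_const card_ord mulnC.
by move=> j _; have [i0 /sum_lee_wt_mulmx_rV_on_twoZ4] := odd_col j.
Qed.
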